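(* Let $p$ be a prime and $r\in\mathbb{Z}$. Let $j\in\{0,1,\dots,p-1\}$ be the residue of $-r$ modulo $p$ and $K=\sum_{k=1}^{j}p^k$. Then for all integers $n\geq K$, \[ B_{n,r}\equiv B_{n-K}\pmod p. \]
   Context: $B_n$ is the $n$-th Bell number. For any integer $s$, the $s$-Bell numbers are defined by $\sum_{n\geq0}B_{n,s}\frac{t^n}{n!}=e^{e^t-1+st}$. *)

From HB Require Import structures.
From mathcomp Require Import all_boot all_order all_algebra.
Set Implicit Arguments. Unset Strict Implicit. Unset Printing Implicit Defensive.
Import Order.TTheory GRing.Theory Num.Theory.

Fixpoint stirling2 (n k : nat) : nat :=
  match n, k with
  | 0, 0 => 1
  | 0, _.+1 => 0
  | _.+1, 0 => 0
  | n'.+1, k'.+1 => k'.+1 * stirling2 n' k'.+1 + stirling2 n' k'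
  end.

Definition bell (n : nat) : nat := \sum_(0 <= k < n.+1) stirling2 n k.

(* The s-Bell numbers, s : int, defined by
     sum_n B_{n,s} t^n/n! = e^{e^t - 1 + s t} = e^{e^t-1} * e^{s t};
   extracting the coefficient of t^n/n! of this product of exponential
   generating functions gives  B_{n,s} = sum_i C(n,i) s^(n-i) B_i. *)
Definition sbell (n : nat) (s : int) : int :=
  (\sum_(0 <= i < n.+1) ('C(n, i))%:Z * s ^+ (n - i) * (bell i)%:Z)%R.

From HB Require Import structures.
From mathcomp Require Import all_boot all_order all_algebra all_field.
From mathcomp Require Import ring.
Set Implicit Arguments. Unset Strict Implicit. Unset Printing Implicit Defensive.
Import Order.TTheory GRing.Theory Num.Theory.

(* Let L be the linear form on polynomials sending X^n to the Bell number B_n.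
   The recurrence B_(n+1) = sum_i C(n,i) B_i reads L(X f) = L(f(X+1)), hence
   L(X(X-1)...(X-k+1) f) = L(f(X+k)).  Over F_p, taking k = p gives Touchard's
   congruence: L kills every multiple of X^p - X - 1.  That polynomial divides
   X^(p^e) - X - e, so (X - e)^(p^e) = X^(p^e) - e may be replaced by X under L,
   and L((X - e)^(m + p^e)) = L(X (X - e)^m) = L((X - e + 1)^m).  Finally
   B_(n,r) = L((X + r)^n) and r = -j in F_p: j such steps lower the exponent by
   K = p + ... + p^j and end at L(X^(n-K)) = B_(n-K). *)

Lemma stirling2_small n k : n < k -> stirling2 n k = 0.
Proof.
elim: n k => [|n IHn] [|k] //= /ltnSE ltnk.
by rewrite (IHn k ltnk) (IHn k.+1 (ltnW ltnk)) muln0.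
Qed.

Lemma stirling2SS n k :
  stirling2 n.+1 k.+1 = k.+1 * stirling2 n k.+1 + stirling2 n k.
Proof. by []. Qed.

Lemma stirling2S0 n : stirling2 n.+1 0 = 0.
Proof. by []. Qed.

Lemma stirling2S1 n : stirling2 n.+1 1 = 1.
Proof. by elim: n => // n IHn; rewrite stirling2SS IHn. Qed.

Arguments stirling2 : simpl never.

Lemma stirling2S_binomial n k :
  stirling2 n.+1 k.+1 = \sum_(i < n.+1) 'C(n, i) * stirling2 i k.
Proof.
elim: n k => [|n IHn] k.
  by rewrite big_ord1 stirling2SS stirling2_small // muln0 bin0 mul1n.
case: k => [|k].
  rewrite stirling2S1 big_ord_recl big1 ?addn0 // => i _.
  by rewrite lift0 stirling2S0 muln0.
rewrite stirling2SS !IHn [RHS]big_ord_recl stirling2_small // muln0 add0n.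
set A := \sum_(i < n.+1) 'C(n, i) * stirling2 i k.+1.
set B := \sum_(i < n.+1) 'C(n, i) * stirling2 i k.
have sumC : \sum_(i < n.+1) 'C(n, i) * stirling2 i.+1 k.+1 = k.+1 * A + B.
  rewrite big_distrr -big_split; apply: eq_bigr => i _ /=.
  by rewrite stirling2SS mulnDr mulnCA.
have sumCS : \sum_(i < n.+1) 'C(n, i.+1) * stirling2 i.+1 k.+1 = A.
  rewrite big_ord_recr /= bin_small // mul0n addn0 /A big_ord_recl.
  by rewrite stirling2_small // muln0 add0n.
under eq_bigr do rewrite lift0 binS mulnDl.
by rewrite big_split /= sumC sumCS mulSn addnA addnAC.
Qed.

Lemma bell_widen n m : n <= m -> bell n = \sum_(k < m.+1) stirling2 n k.
Proof.
move=> le_nm; rewrite /bell -(big_mkord xpredT).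
rewrite [RHS](big_cat_nat _ (n := n.+1)) //=.
rewrite [X in _ = _ + X]big1_seq ?addn0 // => k /andP[_].
by rewrite mem_index_iota => /andP[ltnk _]; rewrite stirling2_small.
Qed.

Lemma bellS n : bell n.+1 = \sum_(i < n.+1) 'C(n, i) * bell i.
Proof.
rewrite (bell_widen (leqnn n.+1)) big_ord_recl stirling2S0 add0n.
under eq_bigr do rewrite stirling2S_binomial.
rewrite exchange_big /=; apply: eq_bigr => i _.
by rewrite -big_distrr (bell_widen (ltnSE (ltn_ord i))).
Qed.

Local Open Scope ring_scope.

Definition bell_eval (R : nzRingType) (q : {poly R}) : R :=
  \sum_(i < size q) q`_i * (bell i)%:R.

Lemma bell_evalE (R : nzRingType) (q : {poly R}) n : (size q <= n)%N ->
  bell_eval q = \sum_(i < n) q`_i * (bell i)%:R.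
Proof.
move=> le_qn.
rewrite /bell_eval (big_ord_widen _ (fun i => q`_i * (bell i)%:R) le_qn).
rewrite big_mkcond; apply: eq_bigr => i _; case: ltnP => // le_qi.
by rewrite nth_default ?mul0r.
Qed.

Lemma bell_eval_is_linear (R : nzRingType) : linear_for *%R (@bell_eval R).
Proof.
move=> a u v; pose n := (size u + size v)%N.
have le_un : (size u <= n)%N by rewrite leq_addr.
have le_vn : (size v <= n)%N by rewrite leq_addl.
have le_wn : (size (a *: u + v)%R <= n)%N.
  rewrite (leq_trans (size_polyD _ _)) // geq_max le_vn andbT.
  exact: leq_trans (size_scale_leq _ _) le_un.
rewrite (bell_evalE le_un) (bell_evalE le_vn) (bell_evalE le_wn).
rewrite big_distrr -big_split; apply: eq_bigr => i _ /=.
by rewrite coefD coefZ mulrDl mulrA.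
Qed.

HB.instance Definition _ (R : nzRingType) :=
  GRing.isLinear.Build R {poly R} R *%R (@bell_eval R) (@bell_eval_is_linear R).

Lemma bell_evalXn (R : nzRingType) n :
  bell_eval ('X^n : {poly R}) = (bell n)%:R.
Proof.
rewrite /bell_eval size_polyXn big_ord_recr /= coefXn eqxx mul1r.
rewrite big1 ?add0r // => i _.
by rewrite coefXn (ltn_eqF (ltn_ord i)) mul0r.
Qed.

Lemma Xadd1_subSn (R : nzRingType) i :
  'X + 1 - i.+1%:R%:P = 'X - i%:R%:P :> {poly R}.
Proof. by rewrite -natr1 polyCD polyC1 opprD addrACA subrr addr0. Qed.

Section BellEvalShift.

Variable R : comNzRingType.
Implicit Types (f h : {poly R}) (c : R).

Lemma bell_eval_XaddC_exp c n :
  bell_eval (('X + c%:P) ^+ n) =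
  \sum_(i < n.+1) (c ^+ (n - i) * (bell i)%:R) *+ 'C(n, i).
Proof.
rewrite addrC exprDn linear_sum; apply: eq_bigr => i _.
by rewrite raddfMn /= -polyC_exp mul_polyC linearZ /= bell_evalXn.
Qed.

Lemma bell_eval_Xadd1_exp n :
  bell_eval (('X + 1) ^+ n : {poly R}) = (bell n.+1)%:R.
Proof.
rewrite -polyC1 bell_eval_XaddC_exp bellS natr_sum; apply: eq_bigr => i _.
by rewrite expr1n mul1r natrM mulr_natl.
Qed.

Lemma bell_eval_mulX f : bell_eval ('X * f) = bell_eval (f \Po ('X + 1)).
Proof.
rewrite -[f in 'X * f]coefK poly_def comp_polyE mulr_sumr !linear_sum.
apply: eq_bigr => i _ /=.
by rewrite -scalerAr -exprS !linearZ /= bell_evalXn bell_eval_Xadd1_exp.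
Qed.

Lemma bell_eval_falling_mul k h :
  bell_eval (\prod_(i < k) ('X - i%:R%:P) * h) =
  bell_eval (h \Po ('X + k%:R%:P)).
Proof.
elim: k h => [|k IHk] h; first by rewrite big_ord0 mul1r addr0 comp_polyXr.
rewrite big_ord_recl subr0 -mulrA bell_eval_mulX rmorphM rmorph_prod /=.
under eq_bigr do rewrite rmorphB /= comp_polyX comp_polyC Xadd1_subSn.
rewrite IHk -comp_polyA rmorphD /= comp_polyX comp_polyC.
by rewrite -addrA -polyCD natr1.
Qed.

End BellEvalShift.

Section TouchardCongruence.

Variables (p : nat) (p_pr : prime p).

Local Notation F := 'F_p.
Implicit Types (c : F) (f g h : {poly F}).

Lemma Fp_expp c : c ^+ p = c.
Proof. by rewrite -[p in c ^+ p](card_Fp p_pr) expf_card. Qed.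

Lemma poly_Fp_exppB f g : (f - g) ^+ p = f ^+ p - g ^+ p.
Proof.
have pcharFp : p \in [pchar {poly F}] by rewrite pchar_poly pchar_Fp.
by rewrite -!(pFrobenius_autE pcharFp) rmorphB.
Qed.

Lemma X_subC_expp e c : ('X - c%:P) ^+ (p ^ e) = 'X^(p ^ e) - c%:P.
Proof.
elim: e => [|e IHe]; first by rewrite expn0 !expr1.
by rewrite expnSr !exprM IHe poly_Fp_exppB -polyC_exp Fp_expp.
Qed.

Lemma prod_X_subn_Fp : \prod_(i < p) ('X - i%:R%:P) = 'X^p - 'X :> {poly F}.
Proof.
rewrite -[p in 'X^p](card_Fp p_pr) finField_genPoly.
have lt_Fp (x : F) : (val x < p)%N.
  by rewrite -[p in (_ < p)%N](Fp_cast p_pr) ltn_ord.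
pose ord_of (x : F) : 'I_p := Ordinal (lt_Fp x).
rewrite (reindex (fun i : 'I_p => i%:R : F)) //.
exists ord_of => [i _ | x _]; apply: val_inj.
  by rewrite /= val_Fp_nat // modn_small.
by rewrite /= val_Fp_nat // modn_small ?lt_Fp.
Qed.

(* Touchard's congruence B_(n+p) = B_(n+1) + B_n, for all n at once. *)
Lemma bell_eval_mul_touchard h : bell_eval (h * ('X^p - 'X - 1)) = 0.
Proof.
rewrite -prod_X_subn_Fp mulrBr mulr1 mulrC raddfB /= bell_eval_falling_mul.
by rewrite pchar_Fp_0 // addr0 comp_polyXr subrr.
Qed.

Lemma bell_eval_dvdp_touchard h : ('X^p - 'X - 1) %| h -> bell_eval h = 0.
Proof. by move=> /dvdpP[q ->]; rewrite bell_eval_mul_touchard. Qed.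

Lemma touchard_dvdp_Xpe e :
  ('X^p - 'X - 1 : {poly F}) %| 'X^(p ^ e) - 'X - e%:R%:P.
Proof.
elim: e => [|e IHe]; first by rewrite expn0 expr1 subrr subr0 dvdp0.
have frob : ('X^(p ^ e) - 'X - e%:R%:P) ^+ p =
    'X^(p ^ e.+1) - 'X^p - e%:R%:P :> {poly F}.
  by rewrite !poly_Fp_exppB -exprM -expnSr -polyC_exp Fp_expp.
have -> : 'X^(p ^ e.+1) - 'X - e.+1%:R%:P =
    ('X^(p ^ e) - 'X - e%:R%:P) ^+ p + ('X^p - 'X - 1) :> {poly F}.
  by rewrite frob !polyC_natr -natr1; ring.
by rewrite dvdp_add // dvdp_exp ?prime_gt0.
Qed.

Lemma bell_eval_X_subSn_exp i m :
  bell_eval (('X - i.+1%:R%:P) ^+ (m + p ^ i.+1) : {poly F}) =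
  bell_eval (('X - i%:R%:P) ^+ m).
Proof.
rewrite exprD X_subC_expp.
have -> : 'X^(p ^ i.+1) - i.+1%:R%:P =
    ('X^(p ^ i.+1) - 'X - i.+1%:R%:P) + 'X :> {poly F} by rewrite addrAC subrK.
rewrite mulrDr raddfD /= bell_eval_dvdp_touchard ?add0r; last first.
  exact/dvdp_mull/touchard_dvdp_Xpe.
rewrite mulrC bell_eval_mulX rmorphXn rmorphB /= comp_polyX comp_polyC.
by rewrite Xadd1_subSn.
Qed.

Lemma bell_eval_X_subn_exp j n : (\sum_(1 <= k < j.+1) p ^ k <= n)%N ->
  bell_eval (('X - j%:R%:P) ^+ n : {poly F}) =
  (bell (n - \sum_(1 <= k < j.+1) p ^ k))%:R.
Proof.
elim: j n => [|j IHj] n; first by rewrite big_geq // subn0 subr0 bell_evalXn.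
rewrite big_nat_recr //= => le_n.
have le_pn : (p ^ j.+1 <= n)%N := leq_trans (leq_addl _ _) le_n.
rewrite -(subnK le_pn) bell_eval_X_subSn_exp IHj; last first.
  by rewrite leq_subRL // addnC.
by rewrite subnK // subnDA subnAC.
Qed.

End TouchardCongruence.

Lemma sbell_bell_eval (R : comNzRingType) n s :
  (sbell n s)%:~R = bell_eval (('X + (s%:~R)%:P) ^+ n) :> R.
Proof.
rewrite bell_eval_XaddC_exp rmorph_sum big_mkord; apply: eq_bigr => i _.
by rewrite !rmorphM rmorphXn /= -!pmulrn -mulrA mulr_natl.
Qed.

Lemma eqz_mod_Fp p (a b : int) : prime p ->
  (a == b %[mod p])%Z = (a%:~R == b%:~R :> 'F_p).
Proof.
move=> p_pr; rewrite eqz_mod_dvd (dvdz_pcharf (pchar_Fp p_pr)).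
by rewrite rmorphB subr_eq0.
Qed.

Lemma Fp_natr_absz_modz p (m : int) : prime p ->
  (`|(m %% p)%Z|%N%:R : 'F_p) = m%:~R.
Proof.
move=> p_pr; rewrite pmulrn gez0_abs ?modz_ge0 -?lt0n ?prime_gt0 //.
by apply/eqP; rewrite -eqz_mod_Fp // modz_mod.
Qed.

Theorem corollary5 (p : nat) (r : int) (hp : prime p) :
  let j : nat := `|((- r) %% (p%:Z))%Z|%N in
  let K : nat := (\sum_(1 <= k < j.+1) p ^ k)%N in
  forall n : nat, (K <= n)%N ->
    (sbell n r = (bell (n - K))%:Z %[mod (p%:Z)])%Z.
Proof.
move=> j K n le_Kn; apply/eqP; rewrite eqz_mod_Fp // sbell_bell_eval -pmulrn.
have -> : (r%:~R : 'F_p) = - j%:R by rewrite Fp_natr_absz_modz // rmorphN opprK.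
by rewrite polyCN bell_eval_X_subn_exp.
Qed.
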